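(* Let $N\ge1$, $H=(H_1,\dots,H_N)\in]0,1[^N$, $a\in\mathbb{R}^N\setminus\{(0,\dots,0)\}$, let $S^H$ be the mixed sub-fractional Brownian motion with parameters $N,a,H$, and let $T>0$. Then, with probability $1$, the Hausdorff dimension of the range $S^H([0,T])=\{S^H(t); t\in[0,T]\}\subset\mathbb{R}$ equals $1$.
   Context: Let $(\Omega,\mathcal F,\mathbb P)$ be a probability space. For $K\in]0,1[$, a fractional Brownian motion on $\mathbb{R}$ with Hurst index $K$ is a continuous centered Gaussian process $\{B^K(t),t\in\mathbb{R}\}$ with $\mathrm{Cov}(B^K(t),B^K(s))=\frac12(|t|^{2K}+|s|^{2K}-|t-s|^{2K})$. The sub-fractional Brownian motion (sfBm) of index $K$ is $\xi^K_t=(B^K_t+B^K_{-t})/\sqrt2$, $t\ge0$; it is a continuous centered Gaussian process with $\mathrm{Cov}(\xi^K_t,\xi^K_s)=s^{2K}+t^{2K}-\frac12\big((s+t)^{2K}+|t-s|^{2K}\big)$. For $N\ge1$, $H\in]0,1[^N$, $a\in\mathbb{R}^N\setminus\{0\}$, the mixed sub-fractional Brownian motion (msfBm) is $S^H(t)=\sum_{i=1}^N a_i\xi^{H_i}(t)$, $t\ge0$, where $\xi^{H_1},\dots,\xi^{H_N}$ are independent sfBms with indices $H_1,\dots,H_N$. *)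

From HB Require Import structures.
From mathcomp Require Import all_boot all_order all_algebra.
From mathcomp Require Import all_classical all_reals all_analysis.
Set Implicit Arguments. Unset Strict Implicit. Unset Printing Implicit Defensive.
Import Order.TTheory GRing.Theory Num.Theory.
Import numFieldNormedType.Exports.
Local Open Scope classical_set_scope.
Local Open Scope ring_scope.

Section Defs.
Context {R : realType}.

(** diameter of a subset of R (an extended real; -oo for the empty set) *)
Definition diam (U : set R) : \bar R :=
  ereal_sup [set (`|x.1 - x.2|)%:E | x in U `*` U].

Definition diam_pow (s : R) (U : set R) : \bar R :=
  if `[< U = set0 >] then 0%E else (fine (diam U) `^ s)%:E.

Definition hausdorff_content (s delta : R) (A : set R) : \bar R :=
  ereal_inf [set (\sum_(0 <= n <oo) diam_pow s (U n))%E
            | U in [set U : nat -> set R |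
                     A `<=` \bigcup_n U n /\ forall n, (diam (U n) <= delta%:E)%E]].

Definition hausdorff_measure (s : R) (A : set R) : \bar R :=
  ereal_sup [set hausdorff_content s delta A | delta in [set delta : R | 0 < delta]].

Definition hausdorff_dim (A : set R) : \bar R :=
  ereal_inf [set s%:E | s in [set s : R | 0 <= s /\ hausdorff_measure s A = 0%E]].

Definition centered_gauss (v : R) : set R -> \bar R :=
  if 0 < v then normal_prob 0 (Num.sqrt v) else @dirac _ R 0 R.

Context {d : measure_display} {Omega : measurableType d}.

(** X : R -> Omega -> R is a centered Gaussian process indexed by [0, +oo)
   with covariance C: every X t is a random variable and every finite linear
   combination sum_k c_k X(t_k) is centered Gaussian with variance
   sum_{k,l} c_k c_l C(t_k,t_l). *)
Definition centered_gaussian_process (P : probability Omega R)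
  (X : R -> Omega -> R) (C : R -> R -> R) : Prop :=
  (forall t, 0 <= t -> measurable_fun setT (X t)) /\
  forall (n : nat) (t : 'I_n -> R) (c : 'I_n -> R),
    (forall k, 0 <= t k) ->
    forall B : set R, measurable B ->
      P ((fun w => \sum_(k < n) c k * X (t k) w) @^-1` B) =
      centered_gauss (\sum_(k < n) \sum_(l < n) c k * c l * C (t k) (t l)) B.

Definition continuous_paths (X : R -> Omega -> R) : Prop :=
  forall w, {within `[0, +oo[%classic, continuous (fun t => X t w)}.

Definition sfbm_cov (K : R) (s t : R) : R :=
  s `^ (2 * K) + t `^ (2 * K)
  - 2^-1 * ((s + t) `^ (2 * K) + `|t - s| `^ (2 * K)).

Definition is_sfbm (P : probability Omega R) (K : R) (X : R -> Omega -> R) : Prop :=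
  continuous_paths X /\ centered_gaussian_process P X (sfbm_cov K).

(** mutual independence of the processes X 0, ..., X (N-1) (indexed by t >= 0):
   product rule on finite-dimensional cylinder events, i.e. independence of
   the generated sigma-algebras (through their generating pi-systems). *)
Definition independent_processes (P : probability Omega R) (N : nat)
  (X : 'I_N -> R -> Omega -> R) : Prop :=
  forall (n : nat) (t : 'I_N -> 'I_n -> R) (B : 'I_N -> 'I_n -> set R),
    (forall i k, 0 <= t i k) -> (forall i k, measurable (B i k)) ->
    P (\bigcap_(i in [set: 'I_N]) [set w | forall k, B i k (X i (t i k) w)]) =
    (\prod_(i < N) P [set w | forall k, B i k (X i (t i k) w)])%E.

Definition msfbm (N : nat) (a : 'I_N -> R) (xi : 'I_N -> R -> Omega -> R)
  (t : R) (w : Omega) : R :=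
  \sum_(i < N) a i * xi i t w.

End Defs.

(* A continuous path on [0, T] whose values at 0 and T differ has as range a
   nondegenerate compact interval, and such an interval has Hausdorff
   dimension 1: for s <= 1 its s-dimensional content is at least half its
   length, while for s > 1 covers by a grid of mesh h give
   H^s <= (length + h) h^(s-1), which tends to 0.
   Almost surely S^H(0) = 0, since each xi^{H_i}(0) is Gaussian of variance 0,
   and S^H(T) <> 0: choosing a_i0 <> 0, S^H(T) = a_i0 xi^{H_i0}(T) + Z with Z
   independent of xi^{H_i0}(T), whose law is a nondegenerate Gaussian, hence
   has no atoms. *)

From HB Require Import structures.
From mathcomp Require Import all_boot all_order all_algebra.
From mathcomp Require Import all_classical all_reals all_analysis.
From mathcomp Require Import ring lra.
Import Order.TTheory GRing.Theory Num.Theory.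
Import numFieldNormedType.Exports.
Local Open Scope classical_set_scope.
Local Open Scope ring_scope.
Set Implicit Arguments. Unset Strict Implicit. Unset Printing Implicit Defensive.

Section diameter.
Context {R : realType}.
Implicit Types (U : set R) (s : R).

Lemma dist_le_diam U x y : U x -> U y -> ((`|x - y|)%:E <= diam U)%E.
Proof. by move=> Ux Uy; apply: ereal_sup_ubound; exists (x, y). Qed.

Lemma diam_le U r : (forall x y, U x -> U y -> `|x - y| <= r) ->
  (diam U <= r%:E)%E.
Proof.
by move=> Ur; apply: ge_ereal_sup => _ [[x y] [/= Ux Uy] <-]; rewrite lee_fin Ur.
Qed.

Lemma diam_set0 : diam (set0 : set R) = -oo%E.
Proof.
rewrite /diam [X in ereal_sup X](_ : _ = set0) ?ereal_sup0 //.
by apply/seteqP; split => // _ [[x y] [/= []]].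
Qed.

Lemma diam_itv_le (x h : R) : 0 <= h -> (diam `[x, (x + h)%R]%classic <= h%:E)%E.
Proof.
move=> h0; apply: diam_le => y z; rewrite /= !in_itv /= => /andP[y1 y2] /andP[z1 z2].
by rewrite ler_norml; apply/andP; split; lra.
Qed.

Lemma bounded_diamE U x r : U x -> (diam U <= r%:E)%E ->
  diam U = (fine (diam U))%:E /\ 0 <= fine (diam U) <= r.
Proof.
move=> Ux Ur; have : (0 <= diam U)%E.
  by apply: le_trans (dist_le_diam Ux Ux); rewrite subrr normr0.
by move: Ur; case: (diam U) => //= t; rewrite !lee_fin => -> ->.
Qed.

Lemma diam_pow_ge0 s U : (0 <= diam_pow s U)%E.
Proof. by rewrite /diam_pow; case: ifP => // _; rewrite lee_fin powR_ge0. Qed.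

Lemma diam_pow_set0 s : diam_pow s (set0 : set R) = 0%E.
Proof. by rewrite /diam_pow asboolT. Qed.

Lemma diam_powE s U : U !=set0 -> diam_pow s U = (fine (diam U) `^ s)%:E.
Proof. by move=> /set0P/eqP U0; rewrite /diam_pow asboolF. Qed.

Lemma diam_pow_itv_le s (x h : R) : 0 <= s -> 0 <= h ->
  (diam_pow s `[x, (x + h)%R]%classic <= (h `^ s)%:E)%E.
Proof.
move=> s0 h0; have xI : `[x, x + h]%classic x by rewrite /= in_itv /= lexx; lra.
have [_ /andP[d0 dh]] := bounded_diamE xI (diam_itv_le x h0).
by rewrite diam_powE; [rewrite lee_fin ge0_ler_powR|exists x].
Qed.

End diameter.

Section hausdorff_dim_interval.
Context {R : realType}.
Implicit Types (U A : set R) (s : R).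

(* A set of diameter [D <= 1] lies in an interval of length [2 D <= 2 D ^ s]. *)
Lemma small_set_in_interval s U : 0 <= s <= 1 -> (diam U <= 1%:E)%E ->
  exists V : set R, [/\ measurable V, U `<=` V &
    (2^-1%:E * lebesgue_measure V <= diam_pow s U)%E].
Proof.
move=> /andP[s0 s1] U1; have [[x Ux]|U0] := pselect (U !=set0); last first.
  exists set0; split; rewrite ?measure0 ?mule0 ?diam_pow_ge0 //.
  by move=> y Uy; apply: U0; exists y.
have [dE /andP[D0 D1]] := bounded_diamE Ux U1; set D := fine (diam U) in dE D0 D1.
have measV : (2^-1%:E * lebesgue_measure `[(x - D)%R, (x + D)%R]%classic <= (D `^ s)%:E)%E.
  rewrite lebesgue_measure_itv /=; case: ifPn => _; last by rewrite mule0 lee_fin powR_ge0.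
  rewrite -EFinM lee_fin (_ : _ * _ = D); last by field.
  have [->|Dn0] := eqVneq D 0; first exact: powR_ge0.
  by apply: ger1_powR => //; rewrite lt0r Dn0 D0.
exists `[x - D, x + D]%classic; split.
- exact: measurable_itv.
- move=> y Uy; have := dist_le_diam Uy Ux; rewrite dE lee_fin.
  by rewrite /= in_itv /= ler_distl.
- by rewrite diam_powE; [exact: measV|exists x].
Qed.

Lemma itv_le_hausdorff_content s A c e : 0 <= s <= 1 -> c < e ->
  `[c, e]%classic `<=` A -> (((e - c) / 2)%:E <= hausdorff_content s 1 A)%E.
Proof.
move=> s01 ce cA; apply: le_ereal_inf_tmp => _ [U [AU U1] <-].
have /choice[V HV] : forall n, exists V : set R, [/\ measurable V, U n `<=` V &
    (2^-1%:E * lebesgue_measure V <= diam_pow s (U n))%E].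
  by move=> n; exact: small_set_in_interval.
have mV n : measurable (V n) by have [] := HV n.
have mUV : measurable (\bigcup_n V n) by exact: bigcup_measurable.
apply: (@le_trans _ _ (2^-1%:E * \sum_(0 <= n <oo) lebesgue_measure (V n))%E).
  rewrite EFinM muleC lee_wpmul2l ?lee_fin ?invr_ge0 //.
  have -> : (e - c)%:E = lebesgue_measure `[c, e]%classic.
    by rewrite lebesgue_measure_itv /= lte_fin ce EFinB.
  apply: (@le_trans _ _ (lebesgue_measure (\bigcup_n V n))).
    apply: le_measure; rewrite ?inE //.
    by move=> y /cA /AU [n _ Uny]; have [_ /(_ _ Uny)] := HV n; exists n.
  exact: measure_sigma_subadditive.
rewrite -nneseriesZl; last by move=> *; exact: measure_ge0.
by apply: lee_nneseries => [n _ _|n _]; [rewrite mule_ge0 ?measure_ge0|have [] := HV n].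
Qed.

Lemma hausdorff_content_ge0 s δ A : (0 <= hausdorff_content s δ A)%E.
Proof.
by apply: le_ereal_inf_tmp => _ [U _ <-]; apply: nneseries_ge0 => *; exact: diam_pow_ge0.
Qed.

Lemma hausdorff_content_le_measure s δ A : 0 < δ ->
  (hausdorff_content s δ A <= hausdorff_measure s A)%E.
Proof. by move=> δ0; apply: ereal_sup_ubound; exists δ. Qed.

Lemma grid_cover (c e h y : R) : 0 < h -> c <= y <= e ->
  exists2 k : nat, (k < (Num.truncn ((e - c) / h)).+1)%N &
    `[c + k%:R * h, c + k%:R * h + h]%classic y.
Proof.
move=> h0 /andP[cy ye]; have yc0 : 0 <= (y - c) / h by apply: divr_ge0; lra.
exists (Num.truncn ((y - c) / h)).
  by rewrite ltnS le_truncn // ler_pM2r ?invr_gt0 //; lra.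
have /andP[k1 k2] := truncn_itv yc0.
rewrite ler_pdivlMr // in k1; rewrite ltr_pdivrMr // in k2.
by rewrite /= in_itv /=; apply/andP; split; lra.
Qed.

Lemma hausdorff_content_grid_le s δ h A c e : 1 <= s -> 0 < h <= δ -> c <= e ->
  A `<=` `[c, e]%classic ->
  (hausdorff_content s δ A <= ((e - c + h) * h `^ (s - 1))%:E)%E.
Proof.
move=> s1 /andP[h0 hδ] ce Ace; set m := (Num.truncn ((e - c) / h)).+1.
pose U k : set R :=
  if (k < m)%N then `[c + k%:R * h, c + k%:R * h + h]%classic else set0.
apply: (@le_trans _ _ (\sum_(0 <= k <oo) diam_pow s (U k))%E).
  apply: ereal_inf_lbound; exists U => //; split => [y /Ace|k].
    rewrite /= in_itv /= => /(grid_cover h0)[k km Iy].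
    by exists k => //; rewrite /U km.
  rewrite /U; case: ifP => _; last by rewrite diam_set0 leNye.
  by apply: le_trans (diam_itv_le _ (ltW h0)) _; rewrite lee_fin.
rewrite (nneseries_split 0 m); last by move=> *; exact: diam_pow_ge0.
rewrite eseries0 ?adde0 ?add0n; last first.
  by move=> k km _; rewrite /U ltnNge -(add0n m) km diam_pow_set0.
apply: (@le_trans _ _ (\sum_(0 <= k < m) (h `^ s))%:E).
  rewrite -sumEFin; apply: lee_sum => k _; rewrite /U.
  case: ifP => _; last by rewrite diam_pow_set0 lee_fin powR_ge0.
  by apply: diam_pow_itv_le; lra.
have mh : m%:R * h <= e - c + h.
  rewrite /m -natr1 mulrDl mul1r lerD2r -ler_pdivlMr //.
  by rewrite truncn_le divr_ge0 //; lra.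
rewrite lee_fin sumr_const_nat subn0 -mulr_powRB1 ?mulrnAl; try lra.
by rewrite -mulr_natl mulrA ler_pM2r ?powR_gt0.
Qed.

Lemma small_mesh (L s δ ε : R) : 0 <= L -> 1 < s -> 0 < δ -> 0 < ε ->
  exists2 h : R, 0 < h <= δ & (L + h) * h `^ (s - 1) <= ε.
Proof.
move=> L0 s1 δ0 ε0; set q := (ε / (L + 1)) `^ (s - 1)^-1.
have q0 : 0 < q by apply: powR_gt0; apply: divr_gt0 => //; lra.
set h := Num.min δ (Num.min 1 q).
have h0 : 0 < h by rewrite !lt_min δ0 ltr01 q0.
have [hδ h1 hq] : [/\ h <= δ, h <= 1 & h <= q] by rewrite !ge_min !lexx !orbT.
exists h; first by rewrite h0 hδ.
have hs : h `^ (s - 1) <= ε / (L + 1).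
  apply: (@le_trans _ _ (q `^ (s - 1))).
    by apply: ge0_ler_powR => //; rewrite ?nnegrE; lra.
  by rewrite /q -powRrM mulVf ?powRr1 //; [apply: divr_ge0|]; lra.
apply: (@le_trans _ _ ((L + 1) * (ε / (L + 1)))).
  by apply: ler_pM => //; [lra|exact: powR_ge0|lra].
by rewrite mulrC mulfVK //; lra.
Qed.

Lemma hausdorff_measure_eq0 s A c e : 1 < s -> c <= e ->
  A `<=` `[c, e]%classic -> hausdorff_measure s A = 0%E.
Proof.
move=> s1 ce Ace; apply/eqP; rewrite eq_le; apply/andP; split; last first.
  exact: le_trans (hausdorff_content_ge0 s 1 A) (hausdorff_content_le_measure _ _ ltr01).
apply: ge_ereal_sup => _ [δ /= δ0 <-]; apply/lee_addgt0Pr => ε ε0; rewrite add0e.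
have [h hδ hε] : exists2 h : R, 0 < h <= δ & (e - c + h) * h `^ (s - 1) <= ε.
  by apply: small_mesh => //; rewrite subr_ge0.
apply: le_trans (hausdorff_content_grid_le _ hδ ce Ace) _; first exact: ltW.
by rewrite lee_fin.
Qed.

Lemma hausdorff_measure_neq0 s A c e : 0 <= s <= 1 -> c < e ->
  `[c, e]%classic `<=` A -> hausdorff_measure s A != 0%E.
Proof.
move=> s01 ce cA; apply: contraTneq (hausdorff_content_le_measure s A ltr01) => ->.
rewrite -ltNge; apply: lt_le_trans (itv_le_hausdorff_content s01 ce cA).
by rewrite lte_fin divr_gt0 //; lra.
Qed.

Lemma hausdorff_dim_eq1 A c e c' e' : c < e -> c' <= e' ->
  `[c, e]%classic `<=` A -> A `<=` `[c', e']%classic -> hausdorff_dim A = 1%E.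
Proof.
move=> ce ce' cA Ace; apply/eqP; rewrite eq_le; apply/andP; split.
  apply/lee_addgt0Pr => ε ε0; apply: ereal_inf_lbound; exists (1 + ε) => //.
  by split; [lra|apply: (hausdorff_measure_eq0 _ ce' Ace); lra].
apply: le_ereal_inf_tmp => _ [s [s0 hs] <-]; rewrite lee_fin leNgt.
apply/negP => s1; have s01 : 0 <= s <= 1 by rewrite s0 ltW.
by have := hausdorff_measure_neq0 s01 ce cA; rewrite hs eqxx.
Qed.

(* By the intermediate value and extreme value theorems, the image is a
   nondegenerate compact interval. *)
Lemma hausdorff_dim_continuous_image (f : R -> R) (a b : R) : a <= b ->
  {within `[a, b], continuous f} -> f a != f b ->
  hausdorff_dim [set f t | t in `[a, b]] = 1%E.
Proof.
move=> ab cf fab.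
have [tM tMab fM] := EVT_max ab cf; have [tm _ fm] := EVT_min ab cf.
apply: (@hausdorff_dim_eq1 _ (Num.min (f a) (f b)) (Num.max (f a) (f b)) (f tm) (f tM)).
- by rewrite lt_max !gt_min !ltxx /= orbF orbC -neq_lt.
- exact: fm tMab.
- by move=> v; rewrite /= in_itv /= => /(IVT ab cf)[t tab <-]; exists t.
- by move=> _ [t tab <-]; rewrite /= in_itv /= fm ?fM // inE.
Qed.

End hausdorff_dim_interval.

Section independence.
Context {R : realType} {d : measure_display} {Omega : measurableType d}.
Variable P : probability Omega R.

Lemma indep_event_sigma (E0 : set Omega) (G : set (set Omega)) :
  measurable E0 -> setI_closed G -> G `<=` measurable ->
  (forall E, G E -> P (E0 `&` E) = (P E0 * P E)%E) ->
  forall E, <<s G >> E -> P (E0 `&` E) = (P E0 * P E)%E.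
Proof.
move=> mE0 GI Gm HG.
pose L := [set E : set Omega | measurable E /\ P (E0 `&` E) = (P E0 * P E)%E].
suff : <<s G >> `<=` L by move=> GL E /GL[].
apply: lambda_system_subset => //; last by move=> E GE; split; [exact: Gm|exact: HG].
have PE0 : (P E0 < +oo)%E by apply: le_lt_trans (probability_le1 P mE0) (ltry _).
apply/dynkin_lambda_system; split.
- by split => //; rewrite setIT probability_setT mule1.
- move=> E [mE hE]; split; first exact: measurableC.
  have -> : P (E0 `&` ~` E) = (P E0 - P (E0 `&` E))%E by rewrite -setDE measureD.
  rewrite hE probability_setC //.
  rewrite -(fineK (fin_num_measure P _ mE0)) -(fineK (fin_num_measure P _ mE)).
  by rewrite -!EFinM -!EFinB mulrBr mulr1.
- move=> F tF hF; have mF n : measurable (F n) by case: (hF n).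
  split; first exact: bigcup_measurable.
  have tE0F : trivIset setT (fun n => E0 `&` F n).
    apply/trivIsetP => i j _ _ ij; rewrite setIACA setIid.
    by move/trivIsetP : tF => /(_ i j I I ij) ->; rewrite setI0.
  rewrite setI_bigcupr !measure_bigcup //=; last by move=> n _; exact: measurableI.
  rewrite -(fineK (fin_num_measure P _ mE0)) -nneseriesZl; last first.
    by move=> *; exact: measure_ge0.
  by apply: eq_eseriesr => n _; rewrite (hF n).2 fineK ?fin_num_measure.
Qed.

End independence.

Section coordinate_independence.
Context {R : realType} {d : measure_display} {Omega : measurableType d}.
Variables (P : probability Omega R) (N : nat) (xi : 'I_N -> R -> Omega -> R).
Variables (i0 : 'I_N) (T : R).
Hypothesis T0 : 0 <= T.
Hypothesis mxi : forall i, measurable_fun setT (xi i T).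
Hypothesis ind : independent_processes P xi.

Definition lincomb_others (b : 'I_N -> R) (w : Omega) : R :=
  \sum_(j < N | j != i0) b j * xi j T w.

Let mpreimage i (B : set R) : measurable B -> measurable (xi i T @^-1` B).
Proof. by move=> mB; rewrite -[X in measurable X]setTI; exact: mxi. Qed.

Let cylinder (B : 'I_N -> set R) : set Omega :=
  [set w | forall j, j != i0 -> B j (xi j T w)].

Let cylinders := [set E | exists2 B : 'I_N -> set R,
  (forall j, measurable (B j)) & E = cylinder B].

Let measurable_cylinder B : (forall j, measurable (B j)) -> measurable (cylinder B).
Proof.
move=> mB; have -> : cylinder B = \bigcap_(j in [set j | j != i0]) (xi j T @^-1` B j).
  by apply/seteqP; split => w /= h j /h.
by apply: fin_bigcap_measurable; [exact: finite_finset|move=> j _; exact: mpreimage].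
Qed.

(* The independence hypothesis, used with one time point per process. *)
Let indep_cylinder (C : set R) B : measurable C -> (forall j, measurable (B j)) ->
  P (xi i0 T @^-1` C `&` cylinder B) =
  (P (xi i0 T @^-1` C) * \prod_(j < N | j != i0) P (xi j T @^-1` B j))%E.
Proof.
move=> mC mB; pose B' (i : 'I_N) (_ : 'I_1) := if i == i0 then C else B i.
have mB' i k : measurable (B' i k) by rewrite /B'; case: ifP.
have single (Q : set R) i : [set w | forall k : 'I_1, Q (xi i T w)] = xi i T @^-1` Q.
  by apply/seteqP; split => w /=; [apply; exact: ord0|move=> ? _].
have -> : xi i0 T @^-1` C `&` cylinder B =
    \bigcap_(i in [set: 'I_N]) [set w | forall k : 'I_1, B' i k (xi i T w)].
  apply/seteqP; split => w /=.
  - by move=> [hC hB] i _ k; rewrite /B'; case: eqP => [->|/eqP /hB].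
  - move=> h; split; first by have := h i0 I ord0; rewrite /B' eqxx.
    by move=> j ji; have := h j I ord0; rewrite /B' (negbTE ji).
rewrite (ind (fun _ _ => T0) mB') (bigD1 i0) //= /B' eqxx single.
by congr (_ * _)%E; apply: eq_bigr => j ji; rewrite (negbTE ji) single.
Qed.

Let cylinder_prob B : (forall j, measurable (B j)) ->
  P (cylinder B) = (\prod_(j < N | j != i0) P (xi j T @^-1` B j))%E.
Proof.
move=> mB; have := indep_cylinder measurableT mB.
by rewrite preimage_setT setTI probability_setT mul1e.
Qed.

Let lincomb_othersE b : lincomb_others b =
  (fun w => \sum_(j < N) if j != i0 then b j * xi j T w else 0).
Proof. by apply/funext => w; rewrite /lincomb_others big_mkcond. Qed.

Lemma measurable_lincomb_others b : measurable_fun setT (lincomb_others b).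
Proof.
rewrite lincomb_othersE; apply: measurable_sum => j; case: (j != i0).
  by apply: measurable_realfun.measurable_funM; [exact: measurable_cst|exact: mxi].
exact: measurable_cst.
Qed.

Let cylinder_measurable_lincomb_others b :
  @measurable_fun _ _ (g_sigma_algebraType cylinders) R setT (lincomb_others b).
Proof.
rewrite lincomb_othersE; apply: measurable_sum => j.
case: (eqVneq j i0) => /= [_|ji]; first exact: measurable_cst.
apply: measurable_realfun.measurable_funM; first exact: measurable_cst.
move=> _ Y mY; rewrite setTI; apply: sub_sigma_algebra.
exists (fun k => if k == j then Y else setT); first by move=> k; case: ifP.
apply/seteqP; split => w /=; first by move=> Yw k _; case: eqP => [->|].
by move=> /(_ j ji); rewrite eqxx.
Qed.

Lemma indep_coord_lincomb_others b (C D : set R) : measurable C -> measurable D ->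
  P (xi i0 T @^-1` C `&` lincomb_others b @^-1` D) =
  (P (xi i0 T @^-1` C) * P (lincomb_others b @^-1` D))%E.
Proof.
move=> mC mD; apply: (indep_event_sigma (G := cylinders) (mpreimage i0 mC)).
- move=> _ _ [B mB ->] [B' mB' ->]; exists (fun j => B j `&` B' j).
    by move=> j; exact: measurableI.
  apply/seteqP; split => w /=; first by move=> [h h'] j ji; split; [exact: h|exact: h'].
  by move=> h; split => j /h[].
- by move=> _ [B mB ->]; exact: measurable_cylinder.
- by move=> _ [B mB ->]; rewrite indep_cylinder // cylinder_prob.
- by have := cylinder_measurable_lincomb_others b measurableT mD; rewrite setTI.
Qed.

End coordinate_independence.

Section atomless_sum.
Context {R : realType} {d : measure_display} {Omega : measurableType d}.
Variable P : probability Omega R.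

(* The joint law of [(Z, X)] is the product of the marginals; the line
   [a0 x + z = 0] meets each vertical section in one point, an atom of [X]. *)
Lemma indep_atomless_sum_eq0 (X Z : Omega -> R) (a0 : R) :
  measurable_fun setT X -> measurable_fun setT Z -> a0 != 0 ->
  (forall C D, measurable C -> measurable D ->
     P (X @^-1` C `&` Z @^-1` D) = (P (X @^-1` C) * P (Z @^-1` D))%E) ->
  (forall r, P (X @^-1` [set r]) = 0%E) ->
  P [set w | a0 * X w + Z w = 0] = 0%E.
Proof.
move=> mX mZ a00 indXZ atomX.
pose Xm : {mfun Omega >-> R} := HB.pack X (isMeasurableFun.Build _ _ _ _ X mX).
pose Zm : {mfun Omega >-> R} := HB.pack Z (isMeasurableFun.Build _ _ _ _ Z mZ).
have mW : measurable_fun setT (fun w => (Z w, X w)) by exact: measurable_fun_pair.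
pose Wm : {mfun Omega >-> (R * R)%type} :=
  HB.pack (fun w => (Z w, X w)) (isMeasurableFun.Build _ _ _ _ _ mW).
pose L := [set p : R * R | a0 * p.2 + p.1 = 0].
have mL : measurable L.
  have mg : measurable_fun setT (fun p : R * R => a0 * p.2 + p.1).
    apply: measurable_realfun.measurable_funD; last exact: measurable_fst.
    apply: measurable_realfun.measurable_funM; first exact: measurable_cst.
    exact: measurable_snd.
  by have := mg measurableT [set 0] (measurable_set1 _); rewrite setTI.
have lawW A B : measurable A -> measurable B ->
    distribution P Wm (A `*` B) = (distribution P Zm A * distribution P Xm B)%E.
  move=> mA mB; rewrite /distribution /pushforward /= muleC -indXZ //.
  by congr (P _); apply/seteqP; split => w /= [].
rewrite -[LHS]/(distribution P Wm L) -(product_measure_unique lawW mL).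
rewrite /product_measure1 /=; apply: integral0_eq => z _ /=.
have -> : xsection L z = [set - z / a0].
  apply/seteqP; split => y; rewrite /xsection /= inE /L /=.
    by move=> hy; apply: (mulfI a00); rewrite mulrCA mulfV // mulr1; lra.
  by move=> ->; rewrite mulrCA mulfV // mulr1 addNr.
exact: atomX.
Qed.

End atomless_sum.

Lemma continuous_within_lincomb {R : realType} (A : set R) (n : nat)
    (F : 'I_n -> R -> R) (c : 'I_n -> R) :
  (forall i, {within A, continuous (F i)}) ->
  {within A, continuous (fun t => \sum_(i < n) c i * F i t)}.
Proof.
move=> cF; have -> : (fun t => \sum_(i < n) c i * F i t) =
    \sum_(i < n) (fun t => c i * F i t) by apply/funext => t; rewrite fct_sumE.
apply: (big_ind (fun g : R -> R => {within A, continuous g})).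
- exact: cst_continuous.
- by move=> g h cg ch; exact: within_continuousD.
- by move=> i _ x; apply: continuousM; [exact: cst_continuous|exact: cF].
Qed.

Section sub_fractional_brownian_motion.
Context {R : realType}.

Lemma sfbm_cov00 (K : R) : K != 0 -> sfbm_cov K 0 0 = 0.
Proof.
move=> K0; rewrite /sfbm_cov subrr normr0 addr0 powR0 ?mulf_neq0 ?pnatr_eq0 //.
by rewrite addr0 mulr0 subrr.
Qed.

(* [sfbm_cov K t t = (2 - 2 ^ (2 K - 1)) t ^ (2 K)], positive because [K < 1]. *)
Lemma sfbm_cov_diag_gt0 (K t : R) : 0 < t -> 0 < K < 1 -> 0 < sfbm_cov K t t.
Proof.
move=> t0 /andP[K0 K1]; have K2 : 2 * K != 0 by rewrite mulf_neq0 ?pnatr_eq0 ?gt_eqF.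
rewrite /sfbm_cov subrr normr0 powR0 // addr0.
rewrite (_ : t + t = 2 * t) ?powRM //; [|exact: ltW|by rewrite mulr2n mulrDl mul1r].
have four : (2 : R) `^ (2 * K) < 4.
  have -> : (4 : R) = 2 `^ 2%:R by rewrite powR_mulrn // expr2; lra.
  by rewrite /powR pnatr_eq0 /= ltr_expR ltr_pM2r ?ln_gt0 ?ltr1n //; lra.
have tK : 0 < t `^ (2 * K) by exact: powR_gt0.
have := powR_ge0 2 (2 * K); set x := t `^ _ in tK *; set y := 2 `^ _ in four *.
by nra.
Qed.

Context {d : measure_display} {Omega : measurableType d}.
Variables (P : probability Omega R) (K : R) (X : R -> Omega -> R).
Hypothesis sfbmX : is_sfbm P K X.

Lemma sfbm_law t B : 0 <= t -> measurable B ->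
  P (X t @^-1` B) = centered_gauss (sfbm_cov K t t) B.
Proof.
move=> t0 mB; have [_ [_ gaussX]] := sfbmX.
have := gaussX 1%N (fun _ => t) (fun _ => 1) (fun _ => t0) B mB.
rewrite !big_ord1 !mul1r => <-; congr (P _).
by apply/seteqP; split => w /=; rewrite big_ord1 mul1r.
Qed.

Lemma sfbm_at0 : K != 0 -> P [set w | X 0 w != 0] = 0%E.
Proof.
move=> K0; have := sfbm_law (lexx 0) (measurableC (measurable_set1 (0 : R))).
rewrite sfbm_cov00 // /centered_gauss ltxx diracE.
have n0 : (0 : R) \notin ~` [set (0 : R)] by rewrite notin_setE /= => /(_ erefl).
rewrite (negbTE n0) /= => PX0; rewrite -[RHS]PX0.
by congr (P _); apply/seteqP; split => w /= /eqP.
Qed.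

Lemma sfbm_atomless t r : 0 < t -> 0 < K < 1 -> P (X t @^-1` [set r]) = 0%E.
Proof.
move=> t0 K01; rewrite (sfbm_law (ltW t0) (measurable_set1 r)) /centered_gauss.
by rewrite sfbm_cov_diag_gt0 // /normal_prob integral_set1.
Qed.

End sub_fractional_brownian_motion.

Section mixed_sub_fractional_brownian_motion.
Context {R : realType} {d : measure_display} {Omega : measurableType d}.
Variables (P : probability Omega R) (N : nat) (H a : 'I_N -> R).
Variable xi : 'I_N -> R -> Omega -> R.
Hypothesis H01 : forall i, 0 < H i < 1.
Hypothesis sfbm_xi : forall i, is_sfbm P (H i) (xi i).

Let mxi i t : 0 <= t -> measurable_fun setT (xi i t).
Proof. by move=> t0; exact: (sfbm_xi i).2.1 t t0. Qed.

Lemma msfbm_continuous_paths w :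
  {within `[0, +oo[%classic, continuous (msfbm a xi)^~ w}.
Proof.
by apply: (continuous_within_lincomb (F := fun i t => xi i t w)) => i; exact: (sfbm_xi i).1.
Qed.

Lemma msfbm_start_negligible :
  P.-negligible (\big[setU/set0]_(i < N) [set w | xi i 0 w != 0]).
Proof.
apply: (big_ind (fun S => P.-negligible S)) => [|A B|i _].
- exact: negligible_set0.
- exact: negligibleU.
exists [set w | xi i 0 w != 0]; split => //; last first.
  by apply: sfbm_at0 (sfbm_xi i) _; case/andP: (H01 i) => /gt_eqF ->.
have := mxi i (lexx 0) measurableT (measurableC (measurable_set1 (0 : R))).
by rewrite setTI; congr (measurable _); apply/seteqP; split => w /= /eqP.
Qed.

Lemma msfbm_eq0_negligible i0 T : a i0 != 0 -> 0 < T ->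
  independent_processes P xi -> P.-negligible [set w | msfbm a xi T w = 0].
Proof.
move=> ai0 T0 indep; have mxiT i := mxi i (ltW T0).
have mS : measurable [set w | msfbm a xi T w = 0].
  have mS : measurable_fun setT (msfbm a xi T).
    apply: measurable_sum => i.
    by apply: measurable_realfun.measurable_funM; [exact: measurable_cst|exact: mxiT].
  by have := mS measurableT _ (measurable_set1 (0 : R)); rewrite setTI.
exists [set w | msfbm a xi T w = 0]; split => //.
have -> : [set w | msfbm a xi T w = 0] =
    [set w | a i0 * xi i0 T w + lincomb_others xi i0 T a w = 0].
  by apply/seteqP; split => w; rewrite /= /msfbm (bigD1 i0).
apply: indep_atomless_sum_eq0 => //.
- exact: measurable_lincomb_others.
- by move=> C D mC mD; apply: indep_coord_lincomb_others => //; exact: ltW.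
- by move=> r; apply: (sfbm_atomless (sfbm_xi i0)).
Qed.

End mixed_sub_fractional_brownian_motion.

Unset Implicit Arguments.

Theorem lemma16 (R : realType) (d : measure_display) (Omega : measurableType d)
  (P : probability Omega R) (N : nat) (H : 'I_N -> R) (a : 'I_N -> R)
  (xi : 'I_N -> R -> Omega -> R) (T : R) :
  (0 < N)%N ->
  (forall i, 0 < H i < 1) ->
  (exists i, a i != 0) ->
  (forall i, is_sfbm P (H i) (xi i)) ->
  independent_processes P xi ->
  0 < T ->
  {ae P, forall w : Omega,
     hausdorff_dim [set msfbm a xi t w | t in `[0, T]] = 1%E}.
Proof.
move=> _ H01 [i0 ai0] sfbm_xi indep T0.
apply: negligibleS (negligibleU (msfbm_start_negligible H01 sfbm_xi)
  (msfbm_eq0_negligible H01 sfbm_xi ai0 T0 indep)) => w /= dim_ne1.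
apply: contrapT => /not_orP[start0 ST0]; apply: dim_ne1.
apply: hausdorff_dim_continuous_image (ltW T0) _ _.
  apply: continuous_subspaceW (msfbm_continuous_paths (a := a) sfbm_xi (w := w)).
  by move=> t; rewrite /= !in_itv /= => /andP[->].
have -> : msfbm a xi 0 w = 0.
  rewrite /msfbm big1 // => i _; suff -> : xi i 0 w = 0 by rewrite mulr0.
  by apply/eqP/negPn/negP => xi0; apply: start0; rewrite (bigD1 i) //=; left.
by rewrite eq_sym; apply/eqP.
Qed.
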